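(* Let $\theta_0\in\mathbb{R}$, let $B\ge1$, and let $\hat\theta_1,\dots,\hat\theta_B$ be independent real-valued random variables. Set $\Delta:=\max_{1\le j\le B}\mathrm{MedBias}_{\theta_0}(\hat\theta_j)$. Then \[ \mathbb{P}\Big(\theta_0\notin\big[\min_{1\le j\le B}\hat\theta_j,\ \max_{1\le j\le B}\hat\theta_j\big]\Big)\le\Big(\tfrac12-\Delta\Big)^B+\Big(\tfrac12+\Delta\Big)^B . \]
   Context: For a real-valued random variable $\hat\theta$ and $\theta_0\in\mathbb{R}$, the median bias is $\mathrm{MedBias}_{\theta_0}(\hat\theta):=\big(\tfrac12-\min\{\mathbb{P}(\hat\theta-\theta_0\ge0),\ \mathbb{P}(\hat\theta-\theta_0\le0)\}\big)_+$, where $(x)_+=\max\{x,0\}$. *)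

From HB Require Import structures.
From mathcomp Require Import all_boot all_order all_algebra.
From mathcomp Require Import all_classical all_reals all_analysis.
Set Implicit Arguments. Unset Strict Implicit. Unset Printing Implicit Defensive.
Import Order.TTheory GRing.Theory Num.Theory.
Local Open Scope classical_set_scope.
Local Open Scope ring_scope.

(* Mutual independence of a finite family of real random variables:
   for every choice of Borel sets A_j, the joint probability factorizes.
   (Taking A_j = setT for j outside a subfamily gives the product rule
   for every subfamily.) *)
Definition mutually_independent_RVs d (T : measurableType d) (R : realType)
    (P : probability T R) (B : nat) (X : 'I_B -> {RV P >-> R}) : Prop :=
  forall A : 'I_B -> set R, (forall j, measurable (A j)) ->
    P (\bigcap_(j in [set: 'I_B]) (X j @^-1` A j)) =
    (\prod_(j < B) P (X j @^-1` A j))%E.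

Definition medbias d (T : measurableType d) (R : realType)
    (P : probability T R) (X : {RV P >-> R}) (theta0 : R) : R :=
  Num.max 0 (2^-1 - Num.min (fine (P [set w | 0 <= X w - theta0]))
                            (fine (P [set w | X w - theta0 <= 0]))).

From HB Require Import structures.
From mathcomp Require Import all_boot all_order all_algebra.
From mathcomp Require Import all_classical all_reals all_analysis.
From mathcomp Require Import lra.
Import Order.TTheory GRing.Theory Num.Theory.
Local Open Scope classical_set_scope.
Local Open Scope ring_scope.

(* The value theta0 lies outside [min_j X_j, max_j X_j] exactly when either
   every X_j exceeds theta0 or every X_j falls below it.  These two events are
   intersections of independent events, so independence turns their
   probabilities into the products  prod_j a_j  and  prod_j b_j  with
   a_j = P(X_j > theta0) and b_j = P(X_j < theta0).  By definition of the
   median bias, a_j and b_j are at most c := 1/2 + Delta, and a_j + b_j <= 1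
   since the two tails are disjoint.  The proof then rests on an elementary
   inequality: if a_j, b_j lie in [0, c], a_j + b_j <= 1 and 1/2 <= c <= 1,
   then  prod a_j + prod b_j <= c^B + (1 - c)^B  (induction on B, one factor
   at a time). *)

Section ProductInequality.
Variable R : realFieldType.

Lemma two_term_step (A B a b c C S : R) :
  0 <= A -> 0 <= B -> 0 <= a -> 0 <= b -> a + b <= 1 -> a <= c -> b <= c ->
  2^-1 <= c -> c <= 1 -> A <= C -> B <= C -> A + B <= C + S ->
  A * a + B * b <= C * c + S * (1 - c).
Proof.
move=> A0 B0 a0 b0 ab ac bc c2 c1 AC BC ABCS.
(* The gap between both sides is a nonnegative combination of these
   products of nonnegative factors. *)
have hA : 0 <= A * (1 - a - b) by apply: mulr_ge0; lra.
have hB : 0 <= B * (1 - a - b) by apply: mulr_ge0; lra.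
have hS : 0 <= (1 - c) * (C + S - A - B) by apply: mulr_ge0; lra.
have hCA : 0 <= (c - (1 - c)) * (C - A) by apply: mulr_ge0; lra.
have hCB : 0 <= (c - (1 - c)) * (C - B) by apply: mulr_ge0; lra.
have [BA|AB] := leP B A.
  have : 0 <= (c - a) * (A - B) by apply: mulr_ge0; lra.
  nra.
have : 0 <= (c - b) * (B - A) by apply: mulr_ge0; lra.
nra.
Qed.

Lemma prod_le_pow n (a : 'I_n -> R) (c : R) :
  (forall i, 0 <= a i) -> (forall i, a i <= c) -> \prod_i a i <= c ^+ n.
Proof.
move=> a0 ac; have -> : c ^+ n = \prod_(i < n) c by rewrite prodr_const card_ord.
by apply: ler_prod => i _; rewrite a0 ac.
Qed.

Lemma prod_sum_le n (a b : 'I_n -> R) (c : R) :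
  2^-1 <= c -> c <= 1 -> (forall i, 0 <= a i) -> (forall i, 0 <= b i) ->
  (forall i, a i <= c) -> (forall i, b i <= c) -> (forall i, a i + b i <= 1) ->
  \prod_i a i + \prod_i b i <= c ^+ n + (1 - c) ^+ n.
Proof.
move=> c2 c1; elim: n a b => [|n IH] a b a0 b0 ac bc ab.
  by rewrite !big_ord0 !expr0.
rewrite !big_ord_recr /= !exprSr.
apply: two_term_step => //.
- exact: prodr_ge0.
- exact: prodr_ge0.
- exact: prod_le_pow.
- exact: prod_le_pow.
- exact: IH.
Qed.

End ProductInequality.

Lemma notin_range_iff (R : realDomainType) (B : nat) (i0 : 'I_B)
    (x : 'I_B -> R) (t : R) :
  t \notin `[\big[Num.min/x i0]_(j < B) x j, \big[Num.max/x i0]_(j < B) x j]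
  <-> (forall j, t < x j) \/ (forall j, x j < t).
Proof.
rewrite in_itv /= negb_and -!ltNge; split.
- case/orP=> lt_t; [left|right] => j.
  + exact: lt_le_trans lt_t (bigmin_le _ j _).
  + exact: le_lt_trans (le_bigmax _ _ j) lt_t.
- case=> h; apply/orP; [left; apply: lt_bigmin|right; apply: bigmax_lt];
    by move=> *; apply: h.
Qed.

Lemma notin_range_event {T : Type} {R : realDomainType} {B : nat} (i0 : 'I_B)
    (X : 'I_B -> T -> R) (t : R) :
  [set w | t \notin `[\big[Num.min/X i0 w]_(j < B) X j w,
                      \big[Num.max/X i0 w]_(j < B) X j w]] =
  (\bigcap_(j in [set: 'I_B]) X j @^-1` `]t, +oo[) `|`
  \bigcap_(j in [set: 'I_B]) X j @^-1` `]-oo, t[.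
Proof.
apply/seteqP; split=> w.
- by case/notin_range_iff=> h; [left|right] => j _; rewrite /= in_itv /= ?andbT.
- move=> h; apply/notin_range_iff.
  by case: h => h; [left|right] => j; have := h j I; rewrite /= in_itv /= ?andbT.
Qed.

Lemma prob_fineE {d} {T : measurableType d} {R : realType}
    (P : probability T R) {A : set T} : measurable A -> P A = (fine (P A))%:E.
Proof. by move=> mA; rewrite fineK // fin_num_measure. Qed.

Section TailBounds.
Context {d : measure_display} {T : measurableType d} {R : realType}.
Variables (P : probability T R) (X : {RV P >-> R}) (theta0 : R).

Let ge_setE : [set w | 0 <= X w - theta0] = X @^-1` `[theta0, +oo[.
Proof. by apply/seteqP; split=> w; rewrite /= in_itv /= andbT subr_ge0. Qed.

Let le_setE : [set w | X w - theta0 <= 0] = X @^-1` `]-oo, theta0].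
Proof. by apply/seteqP; split=> w; rewrite /= in_itv /= subr_le0. Qed.

Let measurable_preimage (I : interval R) : measurable (X @^-1` [set` I]).
Proof. by apply: measurable_funPTI; exact: measurable_itv. Qed.

(* An open tail is the complement of the opposite closed half-line. *)
Let prob_tail_gt :
  fine (P (X @^-1` `]theta0, +oo[)) = 1 - fine (P (X @^-1` `]-oo, theta0])).
Proof.
rewrite -setCitvl -preimage_setC probability_setC //.
by rewrite (prob_fineE P (measurable_preimage _)).
Qed.

Let prob_tail_lt :
  fine (P (X @^-1` `]-oo, theta0[)) = 1 - fine (P (X @^-1` `[theta0, +oo[)).
Proof.
rewrite -setCitvr -preimage_setC probability_setC //.
by rewrite (prob_fineE P (measurable_preimage _)).
Qed.

(* Each open tail has probability at most 1/2 + MedBias, since the opposite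
   closed half-line has probability at least 1/2 - MedBias. *)
Lemma tails_le_medbias :
  fine (P (X @^-1` `]theta0, +oo[)) <= 2^-1 + medbias X theta0 /\
  fine (P (X @^-1` `]-oo, theta0[)) <= 2^-1 + medbias X theta0.
Proof.
rewrite prob_tail_gt prob_tail_lt /medbias ge_setE le_setE.
set q := fine _; set p := fine _.
have mb : 2^-1 - Num.min p q <= Num.max 0 (2^-1 - Num.min p q).
  by rewrite le_max lexx orbT.
have [minp minq] : Num.min p q <= p /\ Num.min p q <= q.
  by rewrite !ge_min !lexx orbT.
split; lra.
Qed.

Lemma medbias_le_half : medbias X theta0 <= 2^-1.
Proof.
rewrite /medbias ge_max invr_ge0 ler0n /= gerBl le_min.
by rewrite -!lee_fin -!prob_fineE ?ge_setE ?le_setE // !measure_ge0.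
Qed.

(* The two open tails are disjoint, so their probabilities sum to at most 1. *)
Lemma tails_sum_le1 :
  fine (P (X @^-1` `]theta0, +oo[)) + fine (P (X @^-1` `]-oo, theta0[)) <= 1.
Proof.
rewrite -lee_fin EFinD -!prob_fineE // -measureU //.
  by apply: probability_le1; exact: measurableU.
apply/seteqP; split=> w //=; rewrite !in_itv /= andbT => -[lt1 lt2].
by have := lt_trans lt1 lt2; rewrite ltxx.
Qed.

End TailBounds.

Section IndependentTails.
Context {d : measure_display} {T : measurableType d} {R : realType}.
Variables (P : probability T R) (B : nat) (X : 'I_B -> {RV P >-> R}).
Hypothesis indep : mutually_independent_RVs X.

Let measurable_preimage (I : interval R) j : measurable (X j @^-1` [set` I]).
Proof. by apply: measurable_funPTI; exact: measurable_itv. Qed.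

Let measurable_all (I : interval R) :
  measurable (\bigcap_(j in [set: 'I_B]) X j @^-1` [set` I]).
Proof.
by apply: fin_bigcap_measurable => // j _; exact: finite_finset.
Qed.

Lemma prob_all_in (I : interval R) :
  P (\bigcap_(j in [set: 'I_B]) X j @^-1` [set` I]) =
  (\prod_(j < B) fine (P (X j @^-1` [set` I])))%:E.
Proof.
rewrite (indep (fun=> [set` I]) (fun=> measurable_itv _)) -prodEFin.
by apply: eq_bigr => j _; exact/prob_fineE/measurable_preimage.
Qed.

Lemma prob_outside_range_le (theta0 : R) (hB : (0 < B)%N) :
  (P [set w | theta0 \notin
       `[\big[Num.min/X (Ordinal hB) w]_(j < B) X j w,
         \big[Num.max/X (Ordinal hB) w]_(j < B) X j w]] <=
  (\prod_(j < B) fine (P (X j @^-1` `]theta0, +oo[)) +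
   \prod_(j < B) fine (P (X j @^-1` `]-oo, theta0[)))%:E)%E.
Proof.
rewrite (notin_range_event (Ordinal hB) (fun j => X j)) EFinD.
by rewrite -!prob_all_in; apply: measureU2; exact: measurable_all.
Qed.

End IndependentTails.

Theorem lemma1 (d : measure_display) (T : measurableType d) (R : realType)
    (P : probability T R) (theta0 : R) (B : nat) (hB : (0 < B)%N)
    (X : 'I_B -> {RV P >-> R}) :
  mutually_independent_RVs X ->
  let Delta := \big[Num.max/0]_(j < B) medbias (X j) theta0 in
  (P [set w | theta0 \notin
       `[\big[Num.min/X (Ordinal hB) w]_(j < B) X j w,
         \big[Num.max/X (Ordinal hB) w]_(j < B) X j w]] <=
  ((2^-1 - Delta) ^+ B + (2^-1 + Delta) ^+ B)%:E)%E.
Proof.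
move=> indep; cbv zeta; set Delta := \big[Num.max/0]_(j < B) _.
apply: le_trans (prob_outside_range_le _ _ _ indep theta0 hB) _; rewrite lee_fin.
have /bigmax_leP [Delta_ge0 medbias_le] : Delta <= Delta := lexx _.
have Delta_le_half : Delta <= 2^-1.
  by apply/bigmax_leP; split=> [|j _]; [rewrite invr_ge0 | exact: medbias_le_half].
have -> : 2^-1 - Delta = 1 - (2^-1 + Delta) by lra.
rewrite [leRHS]addrC; apply: prod_sum_le => [||j|j|j|j|j].
- lra.
- lra.
- exact/fine_ge0/measure_ge0.
- exact/fine_ge0/measure_ge0.
- apply: le_trans (tails_le_medbias P (X j) theta0).1 _.
  by rewrite lerD2l medbias_le.
- apply: le_trans (tails_le_medbias P (X j) theta0).2 _.
  by rewrite lerD2l medbias_le.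
- exact: tails_sum_le1.
Qed.
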